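(* Fix $\ell \in \{1,2\}$. If $C_{\mathcal{A}_\ell}$ is satisfied by a pointed interpretation $(\mathcal{I}, d)$ (i.e. $d \in (C_{\mathcal{A}_\ell})^{\mathcal{I}}$), then $(\mathcal{I}, d)$ is $\Sigma$-friendly and for every element $e \in \Delta^{\mathcal{I}}$ that is $\mathtt{x}^*$-reachable from $d$ via a path $\rho$ we have $e \in (\mathsf{Acc}_{\mathcal{A}_\ell})^{\mathcal{I}}$ if and only if the $\Sigma$-word represented by $\rho$ belongs to $\mathcal{L}(\mathcal{A}_\ell)$. Moreover, after reinterpreting the concept name $\mathsf{Acc}_{\mathcal{A}_\ell}$, every $\Sigma$-metaword becomes a model of $C_{\mathcal{A}_\ell}$.
   Context: Setting: the description logic $\mathcal{ALC}$ extended with path expressions $\exists \mathcal{L}.C$ / $\forall\mathcal{L}.C$ for visibly-pushdown languages $\mathcal{L}$ (given by visibly-pushdown automata) over role names, and with the Self operator, where $(\exists r.\mathsf{Self})^{\mathcal{I}} = \{ d \mid (d,d) \in r^{\mathcal{I}}\}$. A path $\rho_1\ldots\rho_{n+1}$ in $\mathcal{I}$ is an $\mathcal{L}$-path if some word $w_1\ldots w_n \in \mathcal{L}$ satisfies $(\rho_i,\rho_{i+1}) \in w_i^{\mathcal{I}}$ for all $i$; $e$ is $\mathcal{L}$-reachable from $d$ if there is an $\mathcal{L}$-path from $d$ to $e$; $(\exists\mathcal{L}.C)^{\mathcal{I}}$ is the set of elements that $\mathcal{L}$-reach an element of $C^{\mathcal{I}}$, and $\forall\mathcal{L}.C := \neg\exists\mathcal{L}.\neg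 C$. Fix a finite alphabet $\Sigma$ of role names and deterministic one-counter automata (DOCA) $\mathcal{A}_1, \mathcal{A}_2$ over $\Sigma$; let $\mathcal{C}_1, \mathcal{C}_2$ be DOCA recognizing the complements of $\mathcal{L}(\mathcal{A}_1), \mathcal{L}(\mathcal{A}_2)$. For a DOCA $\mathcal{A}$ over $\Sigma$, $\tilde{\mathcal{A}}$ denotes a visibly-pushdown automaton over the pushdown alphabet $\tilde\Sigma := (\Sigma\times\{c\},\ (\Sigma\times\{i\})\cup\{\mathtt{x}\},\ \Sigma\times\{r\})$ (call, internal, return letters; $\mathtt{x}$ a fresh internal letter, the same for all automata), such that every word in $\mathcal{L}(\tilde{\mathcal{A}})$ has the form $\tilde a_1\mathtt{x}\tilde a_2\mathtt{x}\ldots\mathtt{x}\tilde a_n$ with $\tilde a_j \in \Sigma\times\{c,i,r\}$, and $\mathcal{L}(\mathcal{A}) = \{\pi_1(\tilde a_1)\ldots\pi_1(\tilde a_n) \mid \tilde a_1\mathtt{x}\ldots\mathtt{x}\tilde a_n \in \mathcal{L}(\tilde{\mathcal{A}})\}$, where $\pi_1$ is the projection to the first component. Letters of $\tilde\Sigma$ are treated as role names. A pointed interpretation $(\mathcal{I}, d)$ is $\Sigma$-friendly if for every $e$ that is $\mathtt{x}^*$-reachable from $d$ there is a unique $a\in\Sigma$ such that $e$ carries $\tilde a$-self-loops for all $\tilde a\in\tilde\Sigma$ with $\pi_1(\tilde a)=a$, and no self-loops for all other letters of $\tilde\Sigma$ (including $\mathtt{x}$). This is axiomatised by $C_{\mathrm{fr}}^{\Sigma}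 := \forall \mathtt{x}^*. \bigsqcup_{a\in\Sigma} \sqcap_{b\in\Sigma,\, b\neq a,\, \pi_1(\tilde a)=a,\, \pi_1(\tilde b)=b} \big( \exists\tilde a.\mathsf{Self} \sqcap \neg\exists\tilde b.\mathsf{Self} \sqcap \neg\exists\mathtt{x}.\mathsf{Self}\big)$, where $\sqcap_{\ldots}$ denotes the (finite) conjunction of concepts over all indicated indices. An $\mathtt{x}^*$-path $\rho$ in a $\Sigma$-friendly $(\mathcal{I},d)$ represents the word in $\Sigma^*$ whose $i$-th letter is $a$ iff the $i$-th element of $\rho$ carries an $(a,c)$-self-loop. A $\Sigma$-metaword is a $\Sigma$-friendly $(\mathcal{I}, d)$ with domain $\{0,\ldots,n-1\}$ for some positive $n$, $\mathtt{x}^{\mathcal{I}} = \{(i,i+1) \mid 0\le i\le n-2\}$, and all other role names interpreted as $\emptyset$ or subsets of the diagonal $\{(i,i)\}$. For $\ell\in\{1,2\}$, with a fresh concept name $\mathsf{Acc}_{\mathcal{A}_\ell}$: $C_{\mathcal{A}_\ell} := C_{\mathrm{fr}}^{\Sigma} \sqcap \forall \mathcal{L}(\tilde{\mathcal{A}}_\ell).\mathsf{Acc}_{\mathcal{A}_\ell} \sqcap \forall\mathcal{L}(\tilde{\mathcal{C}}_\ell).\neg\mathsf{Acc}_{\mathcal{A}_\ell}$. *)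

From mathcomp Require Import all_boot.
Set Implicit Arguments. Unset Strict Implicit. Unset Printing Implicit Defensive.

(* The pushdown alphabet  Sigma~ = (Sigma x {c}, (Sigma x {i}) u {x}, Sigma x {r}) *)
Inductive kind := Call | Int | Ret.

(* a letter of Sigma~ : [Some (a, k)] is (a,k), [None] is the fresh letter x *)
Definition tl (Sig : finType) := option (Sig * kind).
Definition xl {Sig : finType} : tl Sig := None.

Definition kind_of {Sig : finType} (t : tl Sig) : kind :=
  match t with None => Int | Some (_, k) => k end.

Definition proj1_tl {Sig : finType} (t : Sig * kind) : Sig := t.1.

Inductive eff := Dec | Keep | Inc.

Record doca (Sig : finType) := Doca {
  dstate : finType;
  dinit : dstate;
  dfinal : pred dstate;
  (* transition depends on the state, the letter and whether the counter is 0 *)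
  dtrans : dstate -> Sig -> bool -> dstate * eff;
  dwf : forall q a, (dtrans q a true).2 <> Dec }.

Definition dstep {Sig : finType} (A : doca Sig) (cfg : dstate A * nat) (a : Sig)
  : dstate A * nat :=
  let: (q, c) := cfg in
  let: (q', e) := dtrans q a (c == 0) in
  (q', match e with Inc => c.+1 | Keep => c | Dec => c.-1 end).

Definition daccepts {Sig : finType} (A : doca Sig) (w : seq Sig) : Prop :=
  dfinal (foldl (dstep (A := A)) (dinit A, 0) w).1.

(* Visibly-pushdown automata over Sigma~ (acceptance by final state,
   returns on the empty stack allowed). *)
Record vpa (Sig : finType) := Vpa {
  vstate : finType;
  vstack : finType;
  vinit : vstate;
  vfinal : pred vstate;
  vcall : vstate -> tl Sig -> vstack -> vstate -> bool;
  vint  : vstate -> tl Sig -> vstate -> bool;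
  vret  : vstate -> tl Sig -> option vstack -> vstate -> bool }.

Definition vstep {Sig : finType} (V : vpa Sig)
  (cfg : vstate V * seq (vstack V)) (t : tl Sig)
  (cfg' : vstate V * seq (vstack V)) : Prop :=
  let: (q, s) := cfg in let: (q', s') := cfg' in
  match kind_of t with
  | Call => exists g, vcall q t g q' /\ s' = g :: s
  | Int => vint q t q' /\ s' = s
  | Ret => match s with
           | [::] => vret q t None q' /\ s' = [::]
           | g :: s0 => vret q t (Some g) q' /\ s' = s0
           end
  end.

Fixpoint vrun {Sig : finType} (V : vpa Sig) cfg (u : seq (tl Sig)) cfg' : Prop :=
  match u with
  | [::] => cfg' = cfg
  | t :: u' => exists cfg1, @vstep Sig V cfg t cfg1 /\ @vrun Sig V cfg1 u' cfg'
  end.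

Definition vaccepts {Sig : finType} (V : vpa Sig) (u : seq (tl Sig)) : Prop :=
  exists q s, @vrun Sig V (vinit V, [::]) u (q, s) /\ vfinal q.

Fixpoint tword {Sig : finType} (ts : seq (Sig * kind)) : seq (tl Sig) :=
  match ts with
  | [::] => [::]
  | [:: t] => [:: Some t]
  | t :: ts' => Some t :: xl :: tword ts'
  end.

Definition tilde_of {Sig : finType} (A : doca Sig) (At : vpa Sig) : Prop :=
  (forall u, vaccepts At u -> exists ts, ts <> [::] /\ u = tword ts) /\
  (forall w, daccepts A w <->
     exists ts, vaccepts At (tword ts) /\ ts <> [::] /\ w = map proj1_tl ts).

(* Interpretations over domain D: role names are letters of Sigma~, and the
   single concept name Acc. *)
Record interp (Sig : finType) (D : Type) := Interp {
  role : tl Sig -> D -> D -> Prop;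
  acc : D -> Prop }.

Fixpoint walk {Sig : finType} {D : Type} (I : interp Sig D) (w : seq (tl Sig))
  (d e : D) : Prop :=
  match w with
  | [::] => d = e
  | r :: w' => exists m, role I r d m /\ walk I w' m e
  end.

Definition Lreach {Sig : finType} {D : Type} (I : interp Sig D)
  (L : seq (tl Sig) -> Prop) (d e : D) : Prop :=
  exists w, L w /\ walk I w d e.

Definition xstar {Sig : finType} (w : seq (tl Sig)) : Prop := all (fun t : tl Sig => if t is None then true else false) w.

(* Concepts of ALC + Self + path expressions (needed fragment). *)
Inductive concept (Sig : finType) :=
  | CAcc
  | CTop
  | CNeg of concept Sig
  | CAnd of concept Sig & concept Sig
  | COr of concept Sig & concept Sig
  | CSelf of tl Sig
  | CEx of (seq (tl Sig) -> Prop) & concept Sig.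

Arguments CAcc {Sig}. Arguments CTop {Sig}.

Fixpoint sem {Sig : finType} {D : Type} (I : interp Sig D) (C : concept Sig)
  : D -> Prop :=
  match C with
  | CAcc => acc I
  | CTop => fun _ => True
  | CNeg C1 => fun d => ~ sem I C1 d
  | CAnd C1 C2 => fun d => sem I C1 d /\ sem I C2 d
  | COr C1 C2 => fun d => sem I C1 d \/ sem I C2 d
  | CSelf r => fun d => role I r d d
  | CEx L C1 => fun d => exists e, Lreach I L d e /\ sem I C1 e
  end.

Definition CBot {Sig : finType} : concept Sig := CNeg CTop.
Definition CAll {Sig : finType} (L : seq (tl Sig) -> Prop) (C : concept Sig) :=
  CNeg (CEx L (CNeg C)).
Definition bigAnd {Sig : finType} (cs : seq (concept Sig)) := foldr (@CAnd Sig) CTop cs.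
Definition bigOr {Sig : finType} (cs : seq (concept Sig)) := foldr (@COr Sig) CBot cs.

Definition kinds := [:: Call; Int; Ret].

Definition Cfr_at {Sig : finType} (a : Sig) : concept Sig :=
  bigAnd ([seq CSelf (Some (a, k)) | k <- kinds] ++
          [seq CNeg (CSelf (Some (b, k))) | b <- [seq b <- enum Sig | b != a], k <- kinds] ++
          [:: CNeg (CSelf xl)]).

Definition Cfr (Sig : finType) : concept Sig :=
  CAll xstar (bigOr [seq Cfr_at a | a <- enum Sig]).

Definition C_A {Sig : finType} (At Ct : vpa Sig) : concept Sig :=
  CAnd (Cfr Sig) (CAnd (CAll (vaccepts At) CAcc) (CAll (vaccepts Ct) (CNeg CAcc))).

Definition friendly {Sig : finType} {D : Type} (I : interp Sig D) (d : D) : Prop :=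
  forall e, Lreach I xstar d e ->
    exists! a : Sig,
      (forall k, role I (Some (a, k)) e e) /\
      (forall b k, b <> a -> ~ role I (Some (b, k)) e e) /\
      ~ role I xl e e.

Fixpoint xchain {Sig : finType} {D : Type} (I : interp Sig D) (d : D) (p : seq D)
  : Prop :=
  match p with
  | [::] => True
  | y :: p' => role I xl d y /\ xchain I y p'
  end.

Fixpoint represents {Sig : finType} {D : Type} (I : interp Sig D) (rho : seq D)
  (w : seq Sig) : Prop :=
  match rho, w with
  | [::], [::] => True
  | y :: rho', a :: w' => role I (Some (a, Call)) y y /\ represents I rho' w'
  | _, _ => False
  end.

Definition metaword {Sig : finType} {n : nat} (I : interp Sig 'I_n) (d : 'I_n) : Prop :=
  friendly I d /\
  (forall i j : 'I_n, role I xl i j <-> val j = (val i).+1) /\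
  (forall t i j, t <> xl -> role I t i j -> i = j).

Definition with_acc {Sig : finType} {D : Type} (I : interp Sig D) (P : D -> Prop) :=
  Interp (role I) P.

From mathcomp Require Import all_boot.
From Stdlib Require Import Classical.

Set Implicit Arguments.
Unset Strict Implicit.
Unset Printing Implicit Defensive.

(* At a friendly element labelled [a], all three letters [(a,c)], [(a,i)],
   [(a,r)] loop, so an x-chain representing [w] carries a walk along
   [a~_1 x ... x a~_n] for every choice of the kinds of the [a~_j] projecting
   to [w].  In a model of [C_A] the end of the chain is therefore
   [L(A~)]-reachable when [w] is in [L(A)] and [L(C~)]-reachable otherwise,
   which decides [Acc] there.  Conversely, in a metaword every letter other
   than [x] only labels loops and [x] is the successor relation, so every such
   walk is an x-chain, and x-chains from [d] are determined by their end.  Two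
   walks from [d] to [e] thus project to the same word, no element is reachable
   both by [L(A~)] and by [L(C~)], and [Acc] can be read as
   [L(A~)]-reachability from [d]. *)

Section Semantics.

Variables (Sig : finType) (D : Type).
Implicit Types (I : interp Sig D) (d e : D) (cs : seq (concept Sig)).

Lemma sem_CAll I L C d :
  sem I (CAll L C) d <-> forall e, Lreach I L d e -> sem I C e.
Proof.
split=> [noCex e reach|allC [e [reach notC]]]; last exact/notC/allC.
by apply: NNPP => notC; apply: noCex; exists e.
Qed.

Lemma sem_bigAnd_cat I cs1 cs2 d :
  sem I (bigAnd (cs1 ++ cs2)) d <->
  sem I (bigAnd cs1) d /\ sem I (bigAnd cs2) d.
Proof. by elim: cs1 => [|c cs1 IH] /=; [tauto | move: IH; tauto]. Qed.

Lemma sem_bigAnd_kinds I (f : kind -> concept Sig) d :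
  sem I (bigAnd [seq f k | k <- kinds]) d <-> forall k, sem I (f k) d.
Proof. by split=> [[fC [fI [fR _]]] []|allf] //=; do !split; apply: allf. Qed.

Lemma sem_bigAnd_allpairs (T : eqType) I (f : T -> kind -> concept Sig) s d :
  sem I (bigAnd [seq f t k | t <- s, k <- kinds]) d <->
  forall t k, t \in s -> sem I (f t k) d.
Proof.
elim: s => [|t s IH]; first by [].
rewrite sem_bigAnd_cat sem_bigAnd_kinds IH.
split=> [[ft fs] t' k|allf].
  by rewrite inE => /orP [/eqP ->|]; [exact: ft | exact: fs].
by split=> [k|t' k s_t']; apply: allf; rewrite inE ?s_t' ?orbT ?eqxx.
Qed.

Lemma sem_bigOr_map (T : eqType) I (f : T -> concept Sig) s d :
  sem I (bigOr (map f s)) d <-> exists2 t, t \in s & sem I (f t) d.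
Proof.
elim: s => [|t s IH] /=; first by split; [tauto | case].
rewrite IH; split=> [[ft|[t' s_t' ft']]|[t' + ft']].
- by exists t; rewrite ?inE ?eqxx.
- by exists t'; rewrite // inE s_t' orbT.
- by rewrite inE => /orP [/eqP <-|s_t']; [left | right; exists t'].
Qed.

Definition loop_label I e (a : Sig) : Prop :=
  (forall k, role I (Some (a, k)) e e) /\
  (forall b k, b <> a -> ~ role I (Some (b, k)) e e) /\
  ~ role I xl e e.

Lemma loop_labelP I e a : loop_label I e a ->
  forall b k, role I (Some (b, k)) e e <-> b = a.
Proof.
move=> [loops [noloops _]] b k; split=> [loop|->]; last exact: loops.
by case: (eqVneq b a) => // /eqP neq; case: (noloops b k neq loop).
Qed.

Lemma sem_Cfr_at I a e : sem I (Cfr_at a) e <-> loop_label I e a.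
Proof.
rewrite /Cfr_at !sem_bigAnd_cat sem_bigAnd_kinds sem_bigAnd_allpairs /=.
split=> [[loops [noloops [nox _]]]|[loops [noloops nox]]].
- split=> //; split=> // b k neq; apply: noloops.
  by rewrite mem_filter mem_enum andbT; apply/eqP.
- split=> //; split=> // b k; rewrite mem_filter => /andP [/eqP neq _].
  exact: noloops.
Qed.

Lemma sem_Cfr I d : sem I (Cfr Sig) d <-> friendly I d.
Proof.
rewrite sem_CAll; split=> labelled e /labelled.
- move=> /sem_bigOr_map [a _ /sem_Cfr_at la]; exists a; split=> // b lb.
  exact/esym/(loop_labelP la b Call)/(lb.1 Call).
- move=> [a [la _]]; apply/sem_bigOr_map.
  by exists a; rewrite ?mem_enum ?sem_Cfr_at.
Qed.

Lemma friendly_xstep I d d' : friendly I d -> role I xl d d' -> friendly I d'.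
Proof.
move=> fr x e [w [xw walk_w]]; apply: fr.
by exists (xl :: w); split=> //; exists d'.
Qed.

Lemma friendly_loop_label I d a k :
  friendly I d -> role I (Some (a, k)) d d -> loop_label I d a.
Proof.
move=> fr loop; have [b [lb _]] := fr d (ex_intro _ [::] (conj isT erefl)).
by rewrite ((loop_labelP lb a k).1 loop).
Qed.

Lemma Lreach_with_acc I P L d e :
  Lreach (with_acc I P) L d e <-> Lreach I L d e.
Proof.
have walkE w d' : walk (with_acc I P) w d' e <-> walk I w d' e.
  elim: w d' => [|r w IH] d' //=.
  by split=> [[m [r_m /IH w_m]]|[m [r_m /IH w_m]]]; exists m.
by split=> [[w [Lw /walkE w_e]]|[w [Lw /walkE w_e]]]; exists w.
Qed.

Lemma friendly_with_acc I P d : friendly (with_acc I P) d <-> friendly I d.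
Proof. by split=> fr e /Lreach_with_acc /fr. Qed.

Lemma represents_walk I d p ts :
  friendly I d -> xchain I d p -> represents I (d :: p) (map proj1_tl ts) ->
  walk I (tword ts) d (last d p).
Proof.
elim: p d ts => [|y p IH] d [|[a k] ts] fr //=.
- case: ts => [|t ts] _ [loop] //=.
  by exists d; split=> //; apply: (friendly_loop_label fr loop).1.
- move=> [x chain] [loop]; case: ts => [|t ts] rep //.
  exists d; split; first exact: (friendly_loop_label fr loop).1.
  by exists y; split=> //; apply: IH => //; apply: friendly_xstep fr x.
Qed.

Lemma walk_xchain I d e ts :
  (forall t d1 d2, role I (Some t) d1 d2 -> d1 = d2) ->
  friendly I d -> ts <> [::] -> walk I (tword ts) d e ->
  exists p,
    [/\ xchain I d p, last d p = e & represents I (d :: p) (map proj1_tl ts)].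
Proof.
move=> loops_only; elim: ts d => [|[a k] ts IH] d fr // _.
case: ts IH => [|t ts] IH /=.
- move=> [m [loop <-]]; have d_m := loops_only _ _ _ loop; subst m.
  exists [::]; split=> //; split=> //.
  exact: (friendly_loop_label fr loop).1.
- move=> [m [loop [y [x walk_y]]]]; have d_m := loops_only _ _ _ loop; subst m.
  case/(IH y (friendly_xstep fr x) _): walk_y => // p [chain <- rep].
  exists (y :: p); split=> //; split=> //.
  exact: (friendly_loop_label fr loop).1.
Qed.

Lemma represents_unique I d p w1 w2 :
  friendly I d -> xchain I d p ->
  represents I (d :: p) w1 -> represents I (d :: p) w2 -> w1 = w2.
Proof.
elim: p d w1 w2 => [|y p IH] d [|a1 w1] [|a2 w2] fr //= chain [l1 r1] [l2 r2].
all: have <- := (loop_labelP (friendly_loop_label fr l1) a2 Call).1 l2.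
- by case: w1 w2 r1 r2 => [|? ?] [|? ?].
- case: chain => x chain.
  by rewrite (IH y w1 w2 (friendly_xstep fr x) chain r1 r2).
Qed.

End Semantics.

Section Metaword.

Variables (Sig : finType) (n : nat) (I : interp Sig 'I_n).
Hypothesis x_succ : forall i j : 'I_n, role I xl i j <-> val j = (val i).+1.

Lemma xchain_last d p : xchain I d p -> val (last d p) = val d + size p.
Proof.
elim: p d => [|y p IH] d /=; first by rewrite addn0.
by move=> [/x_succ y_succ /IH ->]; rewrite y_succ addSnnS.
Qed.

Lemma xchain_unique d p1 p2 :
  xchain I d p1 -> xchain I d p2 -> last d p1 = last d p2 -> p1 = p2.
Proof.
move=> c1 c2 eq_last.
have : size p1 = size p2.
  by apply/(@addnI (val d)); rewrite -!xchain_last ?eq_last.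
elim: p1 d p2 c1 c2 {eq_last} => [|y1 p1 IH] d [|y2 p2] //=.
move=> [/x_succ x1 c1] [/x_succ x2 c2] [eq_size].
have eq_y : y1 = y2 by apply: val_inj; rewrite x1 x2.
by rewrite -eq_y in c2 *; rewrite (IH y1 p2 c1 c2 eq_size).
Qed.

End Metaword.

Lemma Lreach_accepted_chain (Sig : finType) (B : doca Sig) (Bt : vpa Sig) D
    (I : interp Sig D) d p w :
  tilde_of B Bt -> friendly I d -> xchain I d p -> represents I (d :: p) w ->
  daccepts B w -> Lreach I (vaccepts Bt) d (last d p).
Proof.
move=> [_ tildeB] fr chain rep /tildeB [ts [acc_ts [_ eq_w]]].
by exists (tword ts); split=> //; apply: represents_walk; rewrite -?eq_w.
Qed.

Lemma sem_C_A (Sig : finType) (At Ct : vpa Sig) D (I : interp Sig D) d :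
  sem I (C_A At Ct) d <->
  friendly I d /\ (forall e, Lreach I (vaccepts At) d e -> acc I e) /\
  (forall e, Lreach I (vaccepts Ct) d e -> ~ acc I e).
Proof.
have allE L C : (forall e, Lreach I L d e -> sem I C e) <-> sem I (CAll L C) d.
  exact: iff_sym (sem_CAll I L C d).
by rewrite -sem_Cfr (allE _ CAcc) (allE _ (CNeg CAcc)).
Qed.

Lemma C_A_sound (Sig : finType) (A Cc : doca Sig) (At Ct : vpa Sig) :
  (forall w, w <> [::] -> ~ daccepts A w -> daccepts Cc w) ->
  tilde_of A At -> tilde_of Cc Ct ->
  forall D (I : interp Sig D) d, sem I (C_A At Ct) d ->
  friendly I d /\
  forall p w, xchain I d p -> represents I (d :: p) w ->
    (acc I (last d p) <-> daccepts A w).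
Proof.
move=> Cc_compl tildeA tildeC D I d /sem_C_A [fr [accA naccC]].
split=> // p w chain rep; split=> [acc_last|acc_w].
- apply: NNPP => nacc_w.
  have w_nil : w <> [::] by move=> w_nil; rewrite w_nil in rep.
  apply: (naccC _ _ acc_last).
  exact: Lreach_accepted_chain tildeC fr chain rep (Cc_compl w w_nil nacc_w).
- exact/accA/(Lreach_accepted_chain tildeA fr chain rep acc_w).
Qed.

Lemma metaword_C_A_model (Sig : finType) (A Cc : doca Sig) (At Ct : vpa Sig) :
  (forall w, daccepts Cc w -> ~ daccepts A w) ->
  tilde_of A At -> tilde_of Cc Ct ->
  forall n (I : interp Sig 'I_n) d, metaword I d ->
  sem (with_acc I (Lreach I (vaccepts At) d)) (C_A At Ct) d.
Proof.
move=> Cc_disj [wfA tildeA] [wfC tildeC] n I d [fr [x_succ loops_only]].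
have loops t i j : role I (Some t) i j -> i = j by apply: loops_only.
apply/sem_C_A; split; first exact/friendly_with_acc.
split=> [e /Lreach_with_acc //|e].
move=> /Lreach_with_acc [u2 [acc2 walk2]] [u1 [acc1 walk1]].
have [ts1 [ts1_nil eq_u1]] := wfA _ acc1; have [ts2 [ts2_nil eq_u2]] := wfC _ acc2.
subst u1 u2.
have [p1 [c1 l1 r1]] := walk_xchain loops fr ts1_nil walk1.
have [p2 [c2 l2 r2]] := walk_xchain loops fr ts2_nil walk2.
have eq_p := xchain_unique x_succ c1 c2 (etrans l1 (esym l2)); subst p2.
have eq_w := represents_unique fr c1 r1 r2.
apply: (Cc_disj (map proj1_tl ts1)).
- by apply/tildeC; exists ts2; rewrite eq_w.
- by apply/tildeA; exists ts1.
Qed.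

Theorem lemma3p3 (Sig : finType) (A Cc : doca Sig) (At Ct : vpa Sig) :
  (* Cc recognizes the complement of L(A) (within the non-empty words) *)
  (forall w : seq Sig, daccepts Cc w <-> (w <> [::] /\ ~ daccepts A w)) ->
  tilde_of A At -> tilde_of Cc Ct ->
  (forall (D : Type) (I : interp Sig D) (d : D),
      sem I (C_A At Ct) d ->
      friendly I d /\
      (forall (p : seq D) (w : seq Sig),
          xchain I d p -> represents I (d :: p) w ->
          (acc I (last d p) <-> daccepts A w))) /\
  (forall (n : nat) (I : interp Sig 'I_n) (d : 'I_n),
      metaword I d ->
      exists P : 'I_n -> Prop, sem (with_acc I P) (C_A At Ct) d).
Proof.
move=> Cc_compl tildeA tildeC; split.
- by apply: C_A_sound tildeA tildeC => w w_nil nacc; apply/Cc_compl.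
- move=> n I d mw; exists (Lreach I (vaccepts At) d).
  by apply: metaword_C_A_model tildeA tildeC n I d mw => w /Cc_compl [].
Qed.
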